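(* Let $0<\mu\le L$, $\kappa=L/\mu$, and $0<\sigma<1$. For $\eta>0$ define $$G(\eta)=\begin{bmatrix}\sigma+\eta\frac{L}{\mu} & \frac{\eta}{\mu} & \eta\frac{L}{\mu}\\ 2L+\eta\frac{L^2}{\mu} & \sigma+\eta\frac{L}{\mu} & \eta\frac{L^2}{\mu}\\ \eta\frac{L}{\mu} & \frac{\eta}{\mu} & 1-\eta\frac{\mu}{L}\end{bmatrix}.$$ If $0<\eta<\bar\eta=\dfrac{(1-\sigma)^2}{2(2-\sigma)(\kappa+\kappa^3)}$, then the spectral radius satisfies $\rho(G(\eta))<1$.
   Context: In the paper, $\mu$ and $L$ are the strong convexity and smoothness constants of the local cost functions ($\mu I\preceq\nabla^2 f_i\preceq LI$), $\sigma=\|W-\frac1N\mathbf{1}\mathbf{1}^T\|_2$ is the spectral norm associated with a symmetric doubly stochastic consensus matrix $W$ of a connected graph, and $G(\eta)$ is the matrix governing the Network-GIANT error recursion (consensus error, gradient-tracking error, optimality gap). $\rho(\cdot)$ denotes the spectral radius. *)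

From HB Require Import structures.
From mathcomp Require Import all_boot all_order all_algebra.
From mathcomp Require Import complex.
From mathcomp Require Import all_classical all_reals.
Set Implicit Arguments. Unset Strict Implicit. Unset Printing Implicit Defensive.
Import Order.TTheory GRing.Theory Num.Theory.
Local Open Scope ring_scope.
Local Open Scope classical_set_scope.

Definition spectral_radius (R : realType) (n : nat) (A : 'M[R]_n) : R :=
  sup [set complex.Re `|z| | z in
        [set z : R[i] | eigenvalue (map_mx (fun x : R => x%:C%C) A) z]].

Definition Gmat (R : realType) (mu L sigma eta : R) : 'M[R]_3 :=
  \matrix_(i < 3, j < 3)
   match nat_of_ord i, nat_of_ord j with
   | 0%N, 0%N => sigma + eta * (L / mu)
   | 0%N, 1%N => eta / mu
   | 0%N, _   => eta * (L / mu)
   | 1%N, 0%N => 2 * L + eta * (L ^+ 2 / mu)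
   | 1%N, 1%N => sigma + eta * (L / mu)
   | 1%N, _   => eta * (L ^+ 2 / mu)
   | _, 0%N   => eta * (L / mu)
   | _, 1%N   => eta / mu
   | _, _     => 1 - eta * (mu / L)
   end.

From HB Require Import structures.
From mathcomp Require Import all_boot all_order all_algebra.
From mathcomp Require Import complex.
From mathcomp Require Import all_classical all_reals.
From mathcomp.algebra_tactics Require Import ring lra.
Set Implicit Arguments.
Unset Strict Implicit.
Unset Printing Implicit Defensive.
Import Order.TTheory GRing.Theory Num.Theory.
Local Open Scope ring_scope.
Local Open Scope classical_set_scope.

(* If A >= 0 and A x < x componentwise for some x > 0, then rho(A) < 1: for a
   left eigenvector v A = z v, |z| sum_j |v_j| x_j <= sum_i |v_i| (A x)_i.
   For G(eta), with b = eta (kappa + kappa^3), the second coordinate of x is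
   scaled by mu and the third is taken just above the value forced by the third
   row; the first two rows then reduce to u < 1 - sigma - b - delta and
   b (2 + b + delta) < u (1 - sigma - b).  Such u, delta > 0 exist exactly when
   2 b (2 - sigma) < (1 - sigma)^2, which is the step-size bound. *)

Lemma norm_eigenvalue_le (F : numFieldType) n (A : 'M[F]_n) (x : 'I_n -> F) (c : F) :
  (forall i j, 0 <= A i j) -> (forall i, 0 < x i) ->
  (forall i, \sum_j A i j * x j <= c * x i) ->
  forall z, eigenvalue A z -> `|z| <= c.
Proof.
move=> A_ge0 x_gt0 Ax_le z /eigenvalueP [v vA v_neq0].
have [j0 vj0_neq0] : exists j, v 0 j != 0.
  apply/existsP; apply: contraNT v_neq0 => /existsPn v0.
  by apply/eqP/rowP => j; rewrite mxE; apply/eqP/negbNE/v0.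
set S := \sum_j `|v 0 j| * x j.
have S_gt0 : 0 < S.
  rewrite /S (bigD1 j0) //=; apply: ltr_wpDr; last by rewrite mulr_gt0 ?normr_gt0.
  by apply: sumr_ge0 => j _; rewrite mulr_ge0 // ltW.
have eig_norm j : `|z| * `|v 0 j| <= \sum_i `|v 0 i| * A i j.
  have /rowP/(_ j) := vA; rewrite !mxE => vA_j.
  rewrite -normrM -vA_j; apply: le_trans (ler_norm_sum _ _ _) _.
  by apply: ler_sum => i _; rewrite normrM (ger0_norm (A_ge0 i j)).
suff : `|z| * S <= c * S by rewrite ler_pM2r.
rewrite /S mulr_sumr; apply: le_trans (_ : \sum_j (\sum_i `|v 0 i| * A i j) * x j <= _).
  apply: ler_sum => j _; rewrite mulrA.
  by apply: ler_wpM2r; [exact: ltW | exact: eig_norm].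
under eq_bigr do rewrite mulr_suml.
rewrite exchange_big mulr_sumr /=; apply: ler_sum => i _.
under eq_bigr do rewrite -mulrA.
by rewrite -mulr_sumr mulrCA ler_wpM2l.
Qed.

Lemma spectral_radius_le (R : realType) n (A : 'M[R]_n) (x : 'I_n -> R) (c : R) :
  0 <= c -> (forall i j, 0 <= A i j) -> (forall i, 0 < x i) ->
  (forall i, \sum_j A i j * x j <= c * x i) ->
  spectral_radius A <= c.
Proof.
move=> c_ge0 A_ge0 x_gt0 Ax_le; rewrite /spectral_radius.
set E := (X in sup X).
have [->|/set0P E_neq0] := eqVneq E set0; first by rewrite sup0.
apply: ge_sup => // _ [z z_eig <-].
suff : `|z| <= c%:C%C by rewrite lecE => /andP[_].
apply: (norm_eigenvalue_le (x := fun i => (x i)%:C%C) _ _ _ z_eig) => [i j|i|i];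
  rewrite ?mxE ?ler0c ?ltcR //.
under eq_bigr do rewrite mxE -rmorphM.
by rewrite -rmorphM -rmorph_sum lecR.
Qed.

Lemma spectral_radius_lt1 (R : realType) n (A : 'M[R]_n) (x : 'I_n -> R) :
  (forall i j, 0 <= A i j) -> (forall i, 0 < x i) ->
  (forall i, \sum_j A i j * x j < x i) ->
  spectral_radius A < 1.
Proof.
move=> A_ge0 x_gt0 Ax_lt.
pose c := \big[Num.max/0]_i ((\sum_j A i j * x j) / x i).
apply: (@le_lt_trans _ _ c); last first.
  by apply: bigmax_lt => // i _; rewrite ltr_pdivrMr // mul1r.
apply: (spectral_radius_le (x := x)) => // [|i]; first exact: bigmax_ge_id.
by rewrite -ler_pdivrMr //; apply: le_bigmax.
Qed.

Lemma Gvec_params_exist (R : realFieldType) (b d : R) :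
  0 < b -> 0 < d -> 2 * b * (1 + d) < d ^+ 2 ->
  exists u delta, [/\ 0 < u, 0 < delta, u < d - b - delta
                      & b * (2 + b + delta) < u * (d - b)].
Proof.
move=> b_gt0 d_gt0 bd_lt; set g := d ^+ 2 - 2 * b * (1 + d).
have g_gt0 : 0 < g by rewrite subr_gt0.
pose delta := g / (4 * d); exists (d - b - 2 * delta), delta.
have delta_gt0 : 0 < delta by rewrite divr_gt0 // mulr_gt0.
have u_large : b * (2 + b + delta) < (d - b - 2 * delta) * (d - b).
  rewrite -subr_gt0 [X in 0 < X](_ : _ = g / 2 + b * delta).
    by apply: addr_gt0; [apply: divr_gt0 | apply: mulr_gt0].
  by rewrite /delta /g; field; rewrite gt_eqF.
split => //; last lra.
have d_gt_b : b < d by nra.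
nra.
Qed.

Section NetworkGiant.

Variables (R : realType) (mu L sigma eta : R).
Hypotheses (mu_gt0 : 0 < mu) (mu_le_L : mu <= L).
Hypotheses (sigma_gt0 : 0 < sigma) (eta_gt0 : 0 < eta).

Local Notation kappa := (L / mu).
Local Notation b := (eta * (kappa + kappa ^+ 3)).

(* Row 3 holds with slack delta / kappa^2; u = b y / kappa for the middle
   coordinate mu y. *)
Definition Gvec (u delta : R) : 'I_3 -> R := fun i =>
  match nat_of_ord i with
  | 0 => 1
  | 1 => mu * (u * kappa / b)
  | _ => kappa ^+ 2 + kappa * (u * kappa / b) + delta / (eta * kappa)
  end.

Let L_gt0 : 0 < L. Proof. exact: lt_le_trans mu_le_L. Qed.
Let kappa_ge1 : 1 <= kappa. Proof. by rewrite ler_pdivlMr // mul1r. Qed.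
Let kappa_gt0 : 0 < kappa. Proof. exact: lt_le_trans ltr01 kappa_ge1. Qed.
Let b_gt0 : 0 < b. Proof. by rewrite mulr_gt0 // addr_gt0 // exprn_gt0. Qed.

Lemma Gvec_gt0 u delta : 0 < u -> 0 < delta -> forall i, 0 < Gvec u delta i.
Proof.
move=> u_gt0 delta_gt0; have y_gt0 : 0 < u * kappa / b by rewrite divr_gt0 // mulr_gt0.
case=> [[|[|[|m]]] hi] //; rewrite /Gvec /=.
- exact: mulr_gt0.
- apply: addr_gt0; first by rewrite addr_gt0 ?exprn_gt0 // mulr_gt0.
  by rewrite divr_gt0 // mulr_gt0.
Qed.

Lemma Gmat_ge0 : b <= 1 -> forall i j, 0 <= Gmat mu L sigma eta i j.
Proof.
move=> b_le1.
have eta_kappa_le1 : eta * kappa <= 1.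
  by apply: le_trans b_le1; rewrite ler_pM2l // lerDl ltW // exprn_gt0.
have eta_kappa_ge0 : 0 <= eta * kappa by rewrite mulr_ge0 ?ltW.
have eta_mu_ge0 : 0 <= eta / mu by rewrite divr_ge0 ?ltW.
have eta_L2_mu_ge0 : 0 <= eta * (L ^+ 2 / mu).
  by rewrite mulr_ge0 ?divr_ge0 ?ltW ?exprn_gt0.
have diag_ge0 : 0 <= sigma + eta * kappa by rewrite addr_ge0 // ltW.
have grad_ge0 : 0 <= 2 * L + eta * (L ^+ 2 / mu) by rewrite addr_ge0 // mulr_ge0 // ltW.
have gap_ge0 : 0 <= 1 - eta * (mu / L).
  rewrite subr_ge0; apply: le_trans eta_kappa_le1.
  by rewrite ler_pM2l // (le_trans _ kappa_ge1) // ler_pdivrMr // mul1r.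
by case=> [[|[|[|m]]] hi] // [[|[|[|n]]] hj] //; rewrite mxE.
Qed.

Lemma Gmat_Gvec_lt u delta :
  0 < delta -> u < 1 - sigma - b - delta -> b * (2 + b + delta) < u * (1 - sigma - b) ->
  forall i, \sum_j Gmat mu L sigma eta i j * Gvec u delta j < Gvec u delta i.
Proof.
move=> delta_gt0 row0 row1.
have [mu_neq0 L_neq0 eta_neq0] : [/\ mu != 0, L != 0 & eta != 0] by rewrite !gt_eqF.
have denom_neq0 : L * mu ^+ 2 + L ^+ 3 != 0.
  by rewrite gt_eqF // addr_gt0 ?exprn_gt0 // mulr_gt0 // exprn_gt0.
case=> [[|[|[|m]]] hi] //; rewrite -subr_gt0 !big_ord_recl big_ord0 !mxE /Gvec /=.
- rewrite [X in 0 < X](_ : _ = 1 - sigma - b - delta - u); first by rewrite !subr_gt0.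
  by field; rewrite mu_neq0 L_neq0 eta_neq0 denom_neq0.
- rewrite [X in 0 < X]
    (_ : _ = mu * kappa / b * (u * (1 - sigma - b) - b * (2 + b + delta))).
    by rewrite mulr_gt0 ?subr_gt0 // divr_gt0 // mulr_gt0.
  by field; rewrite mu_neq0 L_neq0 eta_neq0 denom_neq0.
- rewrite [X in 0 < X](_ : _ = delta / kappa ^+ 2).
    by rewrite divr_gt0 // exprn_gt0.
  by field; rewrite mu_neq0 L_neq0 eta_neq0 denom_neq0.
Qed.

End NetworkGiant.

Theorem theorem2 (R : realType) (mu L sigma eta : R) :
  0 < mu -> mu <= L -> 0 < sigma -> sigma < 1 -> 0 < eta ->
  let kappa := L / mu in
  eta < (1 - sigma) ^+ 2 / (2 * (2 - sigma) * (kappa + kappa ^+ 3)) ->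
  spectral_radius (Gmat mu L sigma eta) < 1.
Proof.
move=> mu_gt0 mu_le_L sigma_gt0 sigma_lt1 eta_gt0 kappa eta_lt.
have kappa_gt0 : 0 < kappa by rewrite divr_gt0 // (lt_le_trans mu_gt0).
have sum_gt0 : 0 < kappa + kappa ^+ 3 by rewrite addr_gt0 // exprn_gt0.
have b_gt0 : 0 < eta * (kappa + kappa ^+ 3) by rewrite mulr_gt0.
have one_sub_sigma_gt0 : 0 < 1 - sigma by rewrite subr_gt0.
have eta_bound : 2 * (eta * (kappa + kappa ^+ 3)) * (1 + (1 - sigma)) < (1 - sigma) ^+ 2.
  have two_sub_sigma_gt0 : 0 < 2 - sigma by lra.
  by move: eta_lt; rewrite ltr_pdivlMr ?mulr_gt0 //; nra.
have b_le1 : eta * (kappa + kappa ^+ 3) <= 1 by nra.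
have [u [delta [u_gt0 delta_gt0 row0 row1]]] :=
  Gvec_params_exist b_gt0 one_sub_sigma_gt0 eta_bound.
apply: (spectral_radius_lt1 (x := Gvec mu L eta u delta)).
- exact: Gmat_ge0.
- exact: Gvec_gt0.
- exact: Gmat_Gvec_lt.
Qed.
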